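(* Let $P,PA$ be labelings, $c$ a command and $\rho_1,\rho_2,\mu_1,\mu_2$ states. Assume $\mathtt b\notin\mathrm{UsedVars}(c)$, $\rho_1(\mathtt b)=\rho_2(\mathtt b)=0$, $|a|_{\mu_1}>0$ and $|a|_{\mu_2}>0$ for every array $a$, $P;PA\vdash_{\mathtt{true}}c$, $\rho_1\sim_P\rho_2$, $\mu_1\sim_{PA}\mu_2$, and $\langle c,\rho_1,\mu_1\rangle\approx\langle c,\rho_2,\mu_2\rangle$. Then $\langle\mathrm{FvSLH}_P(c),\rho_1,\mu_1,\mathtt{false}\rangle\approx_s\langle\mathrm{FvSLH}_P(c),\rho_2,\mu_2,\mathtt{false}\rangle$.
   Context: Language AWhile: scalar variables $X\in\mathcal V$, arrays $a\in\mathcal A$; $e::=n\mid X\mid\mathrm{op}_{\mathbb N}(e,\dots,e)\mid be\,?\,e_1:e_2$; $be::=\mathtt{true}\mid\mathtt{false}\mid\mathrm{cmp}(e,e)\mid\mathrm{op}_{\mathbb B}(be,\dots,be)$; $c::=\mathtt{skip}\mid X:=e\mid c_1;c_2\mid\mathtt{if}\ be\ \mathtt{then}\ c_1\ \mathtt{else}\ c_2\mid\mathtt{while}\ be\ \mathtt{do}\ c\mid X\leftarrow a[e]\mid a[e]\leftarrow e'$. Scalar state $\rho:\mathcal V\to\mathbb N$; array state $\mu$ with sizes $|a|_\mu$ and values $\mu(a)[i]$; $[\![\cdot]\!]_\rho$ pure evaluation. $\mathrm{UsedVars}(c)$: scalar variables occurring in $c$; $\mathtt b$ a reserved scalar variable.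 Sequential semantics: $X:=e\to\mathtt{skip}$ updating $X$; $c_1;c_2\xrightarrow{o}c_1';c_2$ if $c_1\xrightarrow{o}c_1'$; $\mathtt{skip};c\to c$; conditional goes to branch $v=[\![be]\!]_\rho$ observing $\mathrm{branch}(v)$; $\mathtt{while}\ be\ \mathtt{do}\ c\to\mathtt{if}\ be\ \mathtt{then}\ (c;\mathtt{while}\ be\ \mathtt{do}\ c)\ \mathtt{else}\ \mathtt{skip}$; $X\leftarrow a[ie]$ with $i=[\![ie]\!]_\rho<|a|_\mu$ sets $X:=\mu(a)[i]$ observing $\mathrm{read}(a,i)$; $a[ie]\leftarrow e$ with $i<|a|_\mu$ sets $\mu[a[i]\mapsto[\![e]\!]_\rho]$ observing $\mathrm{write}(a,i)$. $\langle c_1,\rho_1,\mu_1\rangle\approx\langle c_2,\rho_2,\mu_2\rangle$ iff for all multi-step executions $\langle c_k,\rho_k,\mu_k\rangle\xrightarrow{O_k}{}^*$ (any prefix), one of $O_1,O_2$ is a prefix of the other. Speculative semantics: configurations $\langle c,\rho,\mu,\beta\rangle$; non-observing rules as sequentially (flag kept, no directive). Conditional: with directive $\mathit{step}$ as sequentially; with $\mathit{force}$ go to branch $\neg[\![be]\!]_\rho$, set $\beta:=\mathtt{true}$; obs $\mathrm{branch}([\![be]\!]_\rho)$. Reads/writes with $\mathit{step}$ as sequentially. Read with $\mathrm{load}(a',j)$: requires $\beta=\mathtt{true}$, $i=[\![ie]\!]_\rho\ge|a|_\mu$, $j<|a'|_\mu$, sets $X:=\mu(a')[j]$, obs $\mathrm{read}(a,i)$.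 Write with $\mathrm{store}(a',j)$: requires $\beta=\mathtt{true}$, $i\ge|a|_\mu$, $j<|a'|_\mu$, sets $\mu[a'[j]\mapsto[\![e]\!]_\rho]$, obs $\mathrm{write}(a,i)$. $\langle c_1,\rho_1,\mu_1,\beta_1\rangle\approx_s\langle c_2,\rho_2,\mu_2,\beta_2\rangle$ iff for all $D,O_1,O_2$, whenever both multi-step with the same directive list $D$ producing $O_1,O_2$, $O_1=O_2$. Labels: $\mathtt{true}$=public, $\mathtt{false}$=secret; $\ell_1\sqsubseteq\ell_2$ iff $\ell_2=\mathtt{true}\Rightarrow\ell_1=\mathtt{true}$; $\ell_1\sqcup\ell_2=\ell_1\wedge\ell_2$. $P(e),P(be)$ public iff all variables occurring are public. $\rho_1\sim_P\rho_2$: agreement on public scalar variables; $\mu_1\sim_{PA}\mu_2$: agreement on sizes and contents of public arrays. IFC typing $P;PA\vdash_{pc}c$: $\mathtt{skip}$; $X:=e$ if $pc\sqcup P(e)\sqsubseteq P(X)$; $c_1;c_2$ if both typed under $pc$; $\mathtt{if}$ if both branches typed under $pc\sqcup P(be)$; $\mathtt{while}$ if body typed under $pc\sqcup P(be)$; $X\leftarrow a[i]$ if $pc\sqcup P(i)\sqcup PA(a)\sqsubseteq P(X)$; $a[i]\leftarrow e$ if $pc\sqcup P(i)\sqcup P(e)\sqsubseteq PA(a)$. Transformation $\mathrm{FvSLH}_P$: with $m(i)=(\mathtt b==1)\,?\,0:i$ and $B(be)=(\mathtt b==0\ \&\&\ be)$ if $P(be)=\mathtt{false}$, else $be$: $\mathtt{skip}$,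 $X:=e$ unchanged; sequences translated componentwise; $\mathtt{if}\ be\ \mathtt{then}\ c_1\ \mathtt{else}\ c_2\mapsto\mathtt{if}\ B(be)\ \mathtt{then}\ (\mathtt b:=B(be)\,?\,\mathtt b:1;[\![c_1]\!])\ \mathtt{else}\ (\mathtt b:=B(be)\,?\,1:\mathtt b;[\![c_2]\!])$; $\mathtt{while}\ be\ \mathtt{do}\ c\mapsto(\mathtt{while}\ B(be)\ \mathtt{do}\ (\mathtt b:=B(be)\,?\,\mathtt b:1;[\![c]\!]));\ \mathtt b:=B(be)\,?\,1:\mathtt b$; $X\leftarrow a[i]\mapsto (X\leftarrow a[i];\ X:=(\mathtt b==1)\,?\,0:X)$ if $P(X)=\mathtt{true}$ and $P(i)=\mathtt{true}$; otherwise $X\leftarrow a[m(i)]$ if $P(i)=\mathtt{false}$ and $X\leftarrow a[i]$ if $P(i)=\mathtt{true}$; $a[i]\leftarrow e\mapsto a[m(i)]\leftarrow e$ if $P(i)=\mathtt{false}$, unchanged otherwise. *)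

From Stdlib Require Import Strings.String Bool Arith List.
Import ListNotations.

Definition var := string.
Definition arr := string.

(* Arithmetic operators op_N and boolean operators op_B / comparisons cmp are
   arbitrary (binary) functions; unary/nullary ones are special cases. *)
Inductive aexp : Type :=
  | ANum (n : nat)
  | AId (X : var)
  | ABin (op : nat -> nat -> nat) (e1 e2 : aexp)
  | ACTIf (be : bexp) (e1 e2 : aexp)
with bexp : Type :=
  | BTrue
  | BFalse
  | BCmp (cmp : nat -> nat -> bool) (e1 e2 : aexp)
  | BBin (op : bool -> bool -> bool) (b1 b2 : bexp).

Inductive com : Type :=
  | Skip
  | Asgn (X : var) (e : aexp)
  | Seq (c1 c2 : com)
  | If (be : bexp) (c1 c2 : com)
  | While (be : bexp) (c : com)
  | ARead (X : var) (a : arr) (i : aexp)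
  | AWrite (a : arr) (i : aexp) (e : aexp).

Definition reg := var -> nat.
Definition mem := arr -> list nat.       (* array state mu: |a| = length (mu a) *)

Definition upd_reg (rho : reg) (X : var) (v : nat) : reg :=
  fun Y => if String.eqb Y X then v else rho Y.

Fixpoint upd_list (l : list nat) (i v : nat) : list nat :=
  match l, i with
  | [], _ => []
  | _ :: t, 0 => v :: t
  | h :: t, S i' => h :: upd_list t i' v
  end.

Definition upd_mem (mu : mem) (a : arr) (i v : nat) : mem :=
  fun a' => if String.eqb a' a then upd_list (mu a) i v else mu a'.

Fixpoint aeval (rho : reg) (e : aexp) : nat :=
  match e with
  | ANum n => n
  | AId X => rho X
  | ABin op e1 e2 => op (aeval rho e1) (aeval rho e2)
  | ACTIf be e1 e2 => if beval rho be then aeval rho e1 else aeval rho e2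
  end
with beval (rho : reg) (be : bexp) : bool :=
  match be with
  | BTrue => true
  | BFalse => false
  | BCmp cmp e1 e2 => cmp (aeval rho e1) (aeval rho e2)
  | BBin op b1 b2 => op (beval rho b1) (beval rho b2)
  end.

Inductive observation : Type :=
  | OBranch (v : bool)
  | ORead (a : arr) (i : nat)
  | OWrite (a : arr) (i : nat).

Definition obs := list observation.

Inductive seq_step : com * reg * mem -> obs -> com * reg * mem -> Prop :=
  | SS_Asgn : forall X e rho mu,
      seq_step (Asgn X e, rho, mu) [] (Skip, upd_reg rho X (aeval rho e), mu)
  | SS_Seq : forall c1 c1' c2 rho mu rho' mu' os,
      seq_step (c1, rho, mu) os (c1', rho', mu') ->
      seq_step (Seq c1 c2, rho, mu) os (Seq c1' c2, rho', mu')
  | SS_SeqSkip : forall c rho mu,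
      seq_step (Seq Skip c, rho, mu) [] (c, rho, mu)
  | SS_If : forall be c1 c2 rho mu,
      seq_step (If be c1 c2, rho, mu) [OBranch (beval rho be)]
               ((if beval rho be then c1 else c2), rho, mu)
  | SS_While : forall be c rho mu,
      seq_step (While be c, rho, mu) []
               (If be (Seq c (While be c)) Skip, rho, mu)
  | SS_ARead : forall X a ie rho mu i,
      aeval rho ie = i -> i < length (mu a) ->
      seq_step (ARead X a ie, rho, mu) [ORead a i]
               (Skip, upd_reg rho X (nth i (mu a) 0), mu)
  | SS_AWrite : forall a ie e rho mu i,
      aeval rho ie = i -> i < length (mu a) ->
      seq_step (AWrite a ie e, rho, mu) [OWrite a i]
               (Skip, rho, upd_mem mu a i (aeval rho e)).

Inductive seq_multi : com * reg * mem -> obs -> com * reg * mem -> Prop :=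
  | SM_Refl : forall cfg, seq_multi cfg [] cfg
  | SM_Trans : forall cfg1 cfg2 cfg3 os1 os2,
      seq_step cfg1 os1 cfg2 -> seq_multi cfg2 os2 cfg3 ->
      seq_multi cfg1 (os1 ++ os2) cfg3.

Definition prefix {A : Type} (l1 l2 : list A) : Prop := exists l, l2 = l1 ++ l.

Definition seq_same_obs (c1 : com) (rho1 : reg) (mu1 : mem)
                        (c2 : com) (rho2 : reg) (mu2 : mem) : Prop :=
  forall cfg1 cfg2 os1 os2,
    seq_multi (c1, rho1, mu1) os1 cfg1 ->
    seq_multi (c2, rho2, mu2) os2 cfg2 ->
    prefix os1 os2 \/ prefix os2 os1.

Inductive direction : Type :=
  | DStep
  | DForce
  | DLoad (a : arr) (j : nat)
  | DStore (a : arr) (j : nat).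

Definition dirs := list direction.

Inductive spec_step : com * reg * mem * bool -> dirs -> obs -> com * reg * mem * bool -> Prop :=
  | Spec_Asgn : forall X e rho mu bf,
      spec_step (Asgn X e, rho, mu, bf) [] [] (Skip, upd_reg rho X (aeval rho e), mu, bf)
  | Spec_Seq : forall c1 c1' c2 rho mu bf rho' mu' bf' ds os,
      spec_step (c1, rho, mu, bf) ds os (c1', rho', mu', bf') ->
      spec_step (Seq c1 c2, rho, mu, bf) ds os (Seq c1' c2, rho', mu', bf')
  | Spec_SeqSkip : forall c rho mu bf,
      spec_step (Seq Skip c, rho, mu, bf) [] [] (c, rho, mu, bf)
  | Spec_If : forall be c1 c2 rho mu bf,
      spec_step (If be c1 c2, rho, mu, bf) [DStep] [OBranch (beval rho be)]
                ((if beval rho be then c1 else c2), rho, mu, bf)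
  | Spec_If_F : forall be c1 c2 rho mu bf,
      spec_step (If be c1 c2, rho, mu, bf) [DForce] [OBranch (beval rho be)]
                ((if negb (beval rho be) then c1 else c2), rho, mu, true)
  | Spec_While : forall be c rho mu bf,
      spec_step (While be c, rho, mu, bf) [] []
                (If be (Seq c (While be c)) Skip, rho, mu, bf)
  | Spec_ARead : forall X a ie rho mu bf i,
      aeval rho ie = i -> i < length (mu a) ->
      spec_step (ARead X a ie, rho, mu, bf) [DStep] [ORead a i]
                (Skip, upd_reg rho X (nth i (mu a) 0), mu, bf)
  | Spec_ARead_U : forall X a ie rho mu i a' j,
      aeval rho ie = i -> length (mu a) <= i -> j < length (mu a') ->
      spec_step (ARead X a ie, rho, mu, true) [DLoad a' j] [ORead a i]
                (Skip, upd_reg rho X (nth j (mu a') 0), mu, true)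
  | Spec_AWrite : forall a ie e rho mu bf i,
      aeval rho ie = i -> i < length (mu a) ->
      spec_step (AWrite a ie e, rho, mu, bf) [DStep] [OWrite a i]
                (Skip, rho, upd_mem mu a i (aeval rho e), bf)
  | Spec_AWrite_U : forall a ie e rho mu i a' j,
      aeval rho ie = i -> length (mu a) <= i -> j < length (mu a') ->
      spec_step (AWrite a ie e, rho, mu, true) [DStore a' j] [OWrite a i]
                (Skip, rho, upd_mem mu a' j (aeval rho e), true).

Inductive spec_multi : com * reg * mem * bool -> dirs -> obs -> com * reg * mem * bool -> Prop :=
  | SpM_Refl : forall cfg, spec_multi cfg [] [] cfg
  | SpM_Trans : forall cfg1 cfg2 cfg3 ds1 ds2 os1 os2,
      spec_step cfg1 ds1 os1 cfg2 -> spec_multi cfg2 ds2 os2 cfg3 ->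
      spec_multi cfg1 (ds1 ++ ds2) (os1 ++ os2) cfg3.

Definition spec_same_obs (c1 : com) (rho1 : reg) (mu1 : mem) (b1 : bool)
                         (c2 : com) (rho2 : reg) (mu2 : mem) (b2 : bool) : Prop :=
  forall ds cfg1 cfg2 os1 os2,
    spec_multi (c1, rho1, mu1, b1) ds os1 cfg1 ->
    spec_multi (c2, rho2, mu2, b2) ds os2 cfg2 ->
    os1 = os2.

Definition label := bool.   (* true = public, false = secret *)
Definition join (l1 l2 : label) : label := l1 && l2.
Definition can_flow (l1 l2 : label) : bool := l1 || negb l2.

Definition pub_vars := var -> label.
Definition pub_arrs := arr -> label.

Fixpoint label_of_aexp (P : pub_vars) (e : aexp) : label :=
  match e with
  | ANum _ => true
  | AId X => P X
  | ABin _ e1 e2 => join (label_of_aexp P e1) (label_of_aexp P e2)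
  | ACTIf be e1 e2 =>
      join (label_of_bexp P be) (join (label_of_aexp P e1) (label_of_aexp P e2))
  end
with label_of_bexp (P : pub_vars) (be : bexp) : label :=
  match be with
  | BTrue | BFalse => true
  | BCmp _ e1 e2 => join (label_of_aexp P e1) (label_of_aexp P e2)
  | BBin _ b1 b2 => join (label_of_bexp P b1) (label_of_bexp P b2)
  end.

Definition pub_equiv (P : pub_vars) (rho1 rho2 : reg) : Prop :=
  forall X, P X = true -> rho1 X = rho2 X.

Definition pub_equiv_arr (PA : pub_arrs) (mu1 mu2 : mem) : Prop :=
  forall a, PA a = true -> mu1 a = mu2 a.

Inductive well_typed (P : pub_vars) (PA : pub_arrs) : label -> com -> Prop :=
  | WT_Skip : forall pc, well_typed P PA pc Skip
  | WT_Asgn : forall pc X e,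
      can_flow (join pc (label_of_aexp P e)) (P X) = true ->
      well_typed P PA pc (Asgn X e)
  | WT_Seq : forall pc c1 c2,
      well_typed P PA pc c1 -> well_typed P PA pc c2 ->
      well_typed P PA pc (Seq c1 c2)
  | WT_If : forall pc be c1 c2,
      well_typed P PA (join pc (label_of_bexp P be)) c1 ->
      well_typed P PA (join pc (label_of_bexp P be)) c2 ->
      well_typed P PA pc (If be c1 c2)
  | WT_While : forall pc be c,
      well_typed P PA (join pc (label_of_bexp P be)) c ->
      well_typed P PA pc (While be c)
  | WT_ARead : forall pc X a i,
      can_flow (join pc (join (label_of_aexp P i) (PA a))) (P X) = true ->
      well_typed P PA pc (ARead X a i)
  | WT_AWrite : forall pc a i e,
      can_flow (join pc (join (label_of_aexp P i) (label_of_aexp P e))) (PA a) = true ->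
      well_typed P PA pc (AWrite a i e).

Fixpoint vars_aexp (e : aexp) : list var :=
  match e with
  | ANum _ => []
  | AId X => [X]
  | ABin _ e1 e2 => vars_aexp e1 ++ vars_aexp e2
  | ACTIf be e1 e2 => vars_bexp be ++ vars_aexp e1 ++ vars_aexp e2
  end
with vars_bexp (be : bexp) : list var :=
  match be with
  | BTrue | BFalse => []
  | BCmp _ e1 e2 => vars_aexp e1 ++ vars_aexp e2
  | BBin _ b1 b2 => vars_bexp b1 ++ vars_bexp b2
  end.

Fixpoint used_vars (c : com) : list var :=
  match c with
  | Skip => []
  | Asgn X e => X :: vars_aexp e
  | Seq c1 c2 => used_vars c1 ++ used_vars c2
  | If be c1 c2 => vars_bexp be ++ used_vars c1 ++ used_vars c2
  | While be c => vars_bexp be ++ used_vars c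
  | ARead X a i => X :: vars_aexp i
  | AWrite a i e => vars_aexp i ++ vars_aexp e
  end.

Definition msf : var := "b"%string.

Definition mask_index (i : aexp) : aexp :=
  ACTIf (BCmp Nat.eqb (AId msf) (ANum 1)) (ANum 0) i.

Definition guard (P : pub_vars) (be : bexp) : bexp :=
  if label_of_bexp P be then be
  else BBin andb (BCmp Nat.eqb (AId msf) (ANum 0)) be.

Fixpoint fvslh (P : pub_vars) (c : com) : com :=
  match c with
  | Skip => Skip
  | Asgn X e => Asgn X e
  | Seq c1 c2 => Seq (fvslh P c1) (fvslh P c2)
  | If be c1 c2 =>
      If (guard P be)
         (Seq (Asgn msf (ACTIf (guard P be) (AId msf) (ANum 1))) (fvslh P c1))
         (Seq (Asgn msf (ACTIf (guard P be) (ANum 1) (AId msf))) (fvslh P c2))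
  | While be c0 =>
      Seq (While (guard P be)
                 (Seq (Asgn msf (ACTIf (guard P be) (AId msf) (ANum 1))) (fvslh P c0)))
          (Asgn msf (ACTIf (guard P be) (ANum 1) (AId msf)))
  | ARead X a i =>
      if P X && label_of_aexp P i then
        Seq (ARead X a i)
            (Asgn X (ACTIf (BCmp Nat.eqb (AId msf) (ANum 1)) (ANum 0) (AId X)))
      else if label_of_aexp P i then ARead X a i
      else ARead X a (mask_index i)
  | AWrite a i e =>
      if label_of_aexp P i then AWrite a i e
      else AWrite a (mask_index i) e
  end.

From Stdlib Require Import Bool List Lia FunctionalExtensionality.
Import ListNotations.

(* Before misspeculation [msf] is 0, so the hardened program computes exactly what the source
   computes: each of its steps is either one of the inserted [msf] updates or zeroing
   assignments, which leave the state unchanged, or a step of the source with the same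
   observation.  Its two runs thus observe what two source runs with a common history observe,
   and these agree because the source is sequentially constant-time; the typing keeps public
   registers and arrays equal meanwhile.  A forced branch makes the first instruction of the
   mispredicted branch set [msf] to 1.  From then on every secret index is masked to 0, every
   load into a public register is zeroed and every secret branch condition is false, so public
   registers stay equal whatever the (now unrelated) memories contain, and everything observed
   is computed from public registers. *)

Definition cfg : Type := com * reg * mem * bool.

Definition cmd_of (x : cfg) : com := fst (fst (fst x)).

Fixpoint step_width (c : com) : nat :=
  match c with
  | Seq Skip _ => 0
  | Seq c1 _ => step_width c1
  | Skip | Asgn _ _ | While _ _ => 0
  | _ => 1
  end.

Lemma spec_step_Skip r m b d o x : ~ spec_step (Skip, r, m, b) d o x.
Proof. intros H; inversion H. Qed.

Lemma spec_step_Seq_inv c1 c2 r m b d o c' r' m' b' :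
  spec_step (Seq c1 c2, r, m, b) d o (c', r', m', b') ->
  (exists c1', spec_step (c1, r, m, b) d o (c1', r', m', b') /\ c' = Seq c1' c2) \/
  (c1 = Skip /\ d = [] /\ o = [] /\ c' = c2 /\ r' = r /\ m' = m /\ b' = b).
Proof. intros H; inversion H; subst; eauto 10. Qed.

Lemma spec_step_width x d o x' :
  spec_step x d o x' -> length d = step_width (cmd_of x) /\ length o = step_width (cmd_of x).
Proof.
  induction 1; simpl in *; auto.
  destruct c1; auto.
Qed.

Lemma spec_multi_length x ds os x' : spec_multi x ds os x' -> length os = length ds.
Proof.
  induction 1; simpl; auto.
  destruct (spec_step_width _ _ _ _ H). rewrite !length_app. lia.
Qed.

Lemma app_inj_length {A : Type} (l1 l2 l3 l4 : list A) :
  l1 ++ l2 = l3 ++ l4 -> length l1 = length l3 -> l1 = l3 /\ l2 = l4.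
Proof.
  revert l3; induction l1 as [|a l1 IH]; intros [|b l3] E L; simpl in *;
    try discriminate; auto.
  injection E as -> E. destruct (IH l3 E) as [-> ->]; auto.
Qed.

Lemma spec_step_cmd_det c r1 m1 b1 r2 m2 b2 d o c1 r1' m1' b1' c2 r2' m2' b2' :
  spec_step (c, r1, m1, b1) d o (c1, r1', m1', b1') ->
  spec_step (c, r2, m2, b2) d o (c2, r2', m2', b2') -> c1 = c2.
Proof.
  intros S1. remember (c, r1, m1, b1) as x eqn:Ex. remember (c1, r1', m1', b1') as x' eqn:Ex'.
  revert c r1 m1 b1 c1 r1' m1' b1' Ex Ex' c2 r2' m2' b2'.
  induction S1; intros ? ? ? ? ? ? ? ? Ex Ex' ? ? ? ? S2;
    injection Ex as <- <- <- <-; injection Ex' as <- <- <- <-;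
    inversion S2; subst; auto;
    try match goal with H : spec_step (Skip, _, _, _) _ _ _ |- _ =>
          exfalso; eapply spec_step_Skip; exact H end.
  all: try congruence.
  f_equal; eauto.
Qed.

Lemma spec_step_flag_true c r m d o c' r' m' b' :
  spec_step (c, r, m, true) d o (c', r', m', b') -> b' = true.
Proof.
  intros S. remember (c, r, m, true) as x eqn:Ex. remember (c', r', m', b') as x' eqn:Ex'.
  revert c r m c' r' m' b' Ex Ex'.
  induction S; intros; inversion Ex; inversion Ex'; subst; eauto.
Qed.

Section Lockstep.

Variable rel : cfg -> cfg -> Prop.
Hypothesis rel_cmd : forall x y, rel x y -> cmd_of x = cmd_of y.
Hypothesis rel_step : forall x y d o1 o2 x' y',
  rel x y -> spec_step x d o1 x' -> spec_step y d o2 y' -> o1 = o2 /\ rel x' y'.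

Lemma lockstep x y ds os1 os2 x' y' :
  rel x y -> spec_multi x ds os1 x' -> spec_multi y ds os2 y' -> os1 = os2.
Proof.
  intros Hxy M1. revert y os2 y' Hxy.
  induction M1 as [x | x x2 x' d1 ds1 o1 os1 S1 M1 IH]; intros y os2 y' Hxy M2.
  - apply spec_multi_length in M2. destruct os2; [reflexivity | discriminate].
  - inversion M2 as [| ? y2 ? d2 ds2 o2 os2' S2 M2']; subst.
    + destruct d1, ds1; try discriminate.
      destruct (spec_step_width _ _ _ _ S1) as [Ld Lo].
      apply spec_multi_length in M1. simpl in *.
      destruct o1, os1; simpl in *; congruence.
    + destruct (spec_step_width _ _ _ _ S1) as [Ld1 _].
      destruct (spec_step_width _ _ _ _ S2) as [Ld2 _].
      rewrite (rel_cmd _ _ Hxy) in Ld1.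
      destruct (app_inj_length d1 ds1 d2 ds2) as [<- <-]; [congruence .. |].
      destruct (rel_step _ _ _ _ _ _ _ Hxy S1 S2) as [<- Hxy2].
      f_equal. eapply IH; eauto.
Qed.

End Lockstep.

Lemma upd_reg_eq r X v : upd_reg r X v X = v.
Proof. unfold upd_reg. now rewrite String.eqb_refl. Qed.

Lemma upd_reg_neq r X Y v : Y <> X -> upd_reg r X v Y = r Y.
Proof. unfold upd_reg. now destruct (String.eqb_spec Y X). Qed.

Lemma upd_reg_id r X : upd_reg r X (r X) = r.
Proof.
  apply functional_extensionality; intros Y. unfold upd_reg.
  now destruct (String.eqb_spec Y X) as [-> |].
Qed.

Scheme aexp_mut_ind := Induction for aexp Sort Prop
  with bexp_mut_ind := Induction for bexp Sort Prop.
Combined Scheme exp_mut_ind from aexp_mut_ind, bexp_mut_ind.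

Section Labels.

Variable P : pub_vars.

Lemma pub_equiv_upd r1 r2 X v1 v2 :
  pub_equiv P r1 r2 -> (P X = true -> v1 = v2) ->
  pub_equiv P (upd_reg r1 X v1) (upd_reg r2 X v2).
Proof.
  intros Hp Hv Y HY. unfold upd_reg.
  destruct (String.eqb_spec Y X) as [-> |]; auto.
Qed.

Lemma pub_equiv_eval r1 r2 : pub_equiv P r1 r2 ->
  (forall e, label_of_aexp P e = true -> aeval r1 e = aeval r2 e) /\
  (forall be, label_of_bexp P be = true -> beval r1 be = beval r2 be).
Proof.
  intros Hp. apply exp_mut_ind; simpl; unfold join; intros;
    repeat match goal with H : _ && _ = true |- _ => apply andb_prop in H as [? ?] end;
    f_equal; auto.
  match goal with IH : _ = true -> beval r1 ?b = beval r2 ?b |- _ => rewrite IH by auto end.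
  destruct (beval r2 be); auto.
Qed.

Lemma can_flow_public l1 l2 : can_flow l1 l2 = true -> l2 = true -> l1 = true.
Proof. intros H ->. now destruct l1. Qed.

Definition pub_agree (v : nat) (e : aexp) : Prop :=
  forall r1 r2, r1 msf = v -> r2 msf = v -> pub_equiv P r1 r2 -> aeval r1 e = aeval r2 e.

Definition pub_agree_b (v : nat) (be : bexp) : Prop :=
  forall r1 r2, r1 msf = v -> r2 msf = v -> pub_equiv P r1 r2 -> beval r1 be = beval r2 be.

Lemma pub_agree_label v e : label_of_aexp P e = true -> pub_agree v e.
Proof. intros He r1 r2 _ _ Hp. now apply (pub_equiv_eval r1 r2 Hp). Qed.

End Labels.

Section Explicit.

Variable P : pub_vars.
Variable PA : pub_arrs.

(* The typing discipline without the program counter, for programs never assigning [msf]: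
   implicit flows are harmless because the source runs being compared take the same branches. *)
Inductive explicit_typed : com -> Prop :=
  | ET_Skip : explicit_typed Skip
  | ET_Asgn X e : X <> msf -> (P X = true -> label_of_aexp P e = true) ->
      explicit_typed (Asgn X e)
  | ET_Seq c1 c2 : explicit_typed c1 -> explicit_typed c2 -> explicit_typed (Seq c1 c2)
  | ET_If be c1 c2 : explicit_typed c1 -> explicit_typed c2 -> explicit_typed (If be c1 c2)
  | ET_While be c : explicit_typed c -> explicit_typed (While be c)
  | ET_Read X a i : X <> msf ->
      (P X = true -> label_of_aexp P i = true /\ PA a = true) ->
      explicit_typed (ARead X a i)
  | ET_Write a i e :
      (PA a = true -> label_of_aexp P i = true /\ label_of_aexp P e = true) ->
      explicit_typed (AWrite a i e).

Lemma well_typed_explicit pc c :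
  well_typed P PA pc c -> ~ In msf (used_vars c) -> explicit_typed c.
Proof.
  induction 1; simpl; intros Hmsf; rewrite ?in_app_iff in Hmsf; constructor; auto 6;
    try (intros ->; tauto).
  all: intros Hpub; pose proof (can_flow_public _ _ H Hpub) as Hj; unfold join in Hj;
    repeat match goal with H : _ && _ = true |- _ => apply andb_prop in H as [? ?] end;
    auto.
Qed.

End Explicit.

Section Unmasked.

Variable P : pub_vars.
Variable PA : pub_arrs.

(* Invariant of hardened code run with [msf = 0]: nothing secret flows explicitly into a
   public register or array.  The [msf] updates are exempt, [msf] being tracked separately. *)
Inductive unmasked_typed : com -> Prop :=
  | UT_Skip : unmasked_typed Skip
  | UT_Asgn X e : (X <> msf -> P X = true -> pub_agree P 0 e) -> unmasked_typed (Asgn X e)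
  | UT_Seq c1 c2 : unmasked_typed c1 -> unmasked_typed c2 -> unmasked_typed (Seq c1 c2)
  | UT_If be c1 c2 : unmasked_typed c1 -> unmasked_typed c2 -> unmasked_typed (If be c1 c2)
  | UT_While be c : unmasked_typed c -> unmasked_typed (While be c)
  | UT_Read X a i : (P X = true -> PA a = true) -> unmasked_typed (ARead X a i)
  | UT_Write a i e : (PA a = true -> pub_agree P 0 e) -> unmasked_typed (AWrite a i e).

Lemma unmasked_typed_fvslh c : explicit_typed P PA c -> unmasked_typed (fvslh P c).
Proof.
  induction 1 as [| X e _ He | | | | X a i _ Hi | a i e He]; simpl;
    repeat constructor; auto; try (intros Hne; contradiction Hne; reflexivity).
  - intros _ HX. apply pub_agree_label. auto.
  - destruct (P X) eqn:HX; simpl.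
    + destruct (Hi eq_refl) as [-> Ha]. repeat constructor; auto.
      intros _ _ r1 r2 E1 E2 Hp. simpl. rewrite E1, E2. apply Hp, HX.
    + destruct (label_of_aexp P i); constructor; congruence.
  - destruct (label_of_aexp P i); constructor; intros Ha;
      apply pub_agree_label, He, Ha.
Qed.

Lemma unmasked_typed_step c r m b d o c' r' m' b' :
  unmasked_typed c -> spec_step (c, r, m, b) d o (c', r', m', b') -> unmasked_typed c'.
Proof.
  intros Hc S. remember (c, r, m, b) as x eqn:Ex. remember (c', r', m', b') as x' eqn:Ex'.
  revert c r m b c' r' m' b' Ex Ex' Hc.
  induction S; intros; inversion Ex; inversion Ex'; subst; inversion Hc; subst;
    repeat constructor; eauto.
  all: match goal with |- context [beval ?r ?b] => destruct (beval r b) end; auto.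
Qed.

Lemma unmasked_step_pub_equiv c r1 m1 r2 m2 d o c1 r1' m1' b1' c2 r2' m2' b2' :
  unmasked_typed c -> pub_equiv P r1 r2 -> pub_equiv_arr PA m1 m2 ->
  r1 msf = 0 -> r2 msf = 0 ->
  spec_step (c, r1, m1, false) d o (c1, r1', m1', b1') ->
  spec_step (c, r2, m2, false) d o (c2, r2', m2', b2') ->
  r1' msf = r2' msf ->
  pub_equiv P r1' r2' /\ pub_equiv_arr PA m1' m2'.
Proof.
  intros Hc Hp Ha E1 E2 S1.
  remember (c, r1, m1, false) as x eqn:Ex. remember (c1, r1', m1', b1') as x' eqn:Ex'.
  revert c r1 m1 c1 r1' m1' b1' Ex Ex' Hc Hp Ha E1 E2 c2 r2' m2' b2'.
  induction S1; intros ? ? ? ? ? ? ? Ex Ex' Hc Hp Ha E1 E2 ? ? ? ? S2 Emsf;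
    inversion Ex; inversion Ex'; subst; inversion Hc; subst; inversion S2; subst;
    try (exfalso; eapply spec_step_Skip; eassumption); auto.
  - split; auto. apply pub_equiv_upd; auto. intros HX.
    destruct (String.eqb_spec X msf) as [-> | Hne].
    + rewrite !upd_reg_eq in Emsf. exact Emsf.
    + match goal with H : X <> msf -> _ |- _ => exact (H Hne HX _ _ E1 E2 Hp) end.
  - eapply IHS1; eauto.
  - (* the index read is part of the shared observation *)
    split; auto. apply pub_equiv_upd; auto. intros HX.
    match goal with H : P X = true -> PA a = true |- _ => rewrite (Ha a (H HX)) end.
    congruence.
  - split; auto. intros a' Ha'. unfold upd_mem.
    destruct (String.eqb_spec a' a) as [-> |]; auto.
    rewrite (Ha a Ha'). f_equal.
    match goal with H : PA a = true -> _ |- _ => exact (H Ha' _ _ E1 E2 Hp) end.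
Qed.

End Unmasked.

(* How much of public-register agreement holds after misspeculation: [Clean] is full agreement
   with [msf = 1]; [Dirty X] is the moment between loading [X] and zeroing it; [Arming e] is the
   moment between the forced branch and the assignment [msf := e], which evaluates to [1]. *)
Inductive mode : Type :=
  | Clean
  | Dirty (X : var)
  | Arming (e : aexp).

Section Masked.

Variable P : pub_vars.

Definition masked_const (n : nat) (e : aexp) : Prop :=
  forall r, r msf = 1 -> aeval r e = n.

(* Invariant of hardened code run with [msf = 1]: what is observed is computed from public
   registers, and a load into a public register is followed by its zeroing. *)
Inductive masked_typed : mode -> com -> Prop :=
  | MT_Skip : masked_typed Clean Skip
  | MT_Asgn X e : X <> msf -> (P X = true -> pub_agree P 1 e) -> masked_typed Clean (Asgn X e)
  | MT_AsgnMsf e : masked_const 1 e -> masked_typed Clean (Asgn msf e)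
  | MT_Seq m c1 c2 : masked_typed m c1 -> masked_typed Clean c2 -> masked_typed m (Seq c1 c2)
  | MT_SeqSkip m c : masked_typed m c -> masked_typed m (Seq Skip c)
  | MT_If be c1 c2 : pub_agree_b P 1 be -> masked_typed Clean c1 -> masked_typed Clean c2 ->
      masked_typed Clean (If be c1 c2)
  | MT_While be c : pub_agree_b P 1 be -> masked_typed Clean c -> masked_typed Clean (While be c)
  | MT_Read X a i : X <> msf -> P X = false -> pub_agree P 1 i -> masked_typed Clean (ARead X a i)
  | MT_ReadZero X a i e : X <> msf -> pub_agree P 1 i -> masked_const 0 e ->
      masked_typed Clean (Seq (ARead X a i) (Asgn X e))
  | MT_Write a i e : pub_agree P 1 i -> masked_typed Clean (AWrite a i e)
  | MT_Zero X e : X <> msf -> masked_const 0 e -> masked_typed (Dirty X) (Asgn X e)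
  | MT_Arm e : masked_typed (Arming e) (Asgn msf e).

Definition masked_equiv (m : mode) (r1 r2 : reg) : Prop :=
  match m with
  | Clean => r1 msf = 1 /\ r2 msf = 1 /\ pub_equiv P r1 r2
  | Dirty X => r1 msf = 1 /\ r2 msf = 1 /\ (forall Y, P Y = true -> Y <> X -> r1 Y = r2 Y)
  | Arming e => pub_equiv P r1 r2 /\ aeval r1 e = 1 /\ aeval r2 e = 1
  end.

Lemma masked_typed_Skip m : masked_typed m Skip -> m = Clean.
Proof. now inversion 1. Qed.

Lemma masked_typed_Arming_inj c e1 e2 :
  masked_typed (Arming e1) c -> masked_typed (Arming e2) c -> e1 = e2.
Proof.
  intros H1. remember (Arming e1) as m eqn:Em. revert e2 Em.
  induction H1 as [| | | m c1 c2 Hc1 IH1 | m c Hc IH | | | | | | | e];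
    intros e2' Em H2; try discriminate; inversion H2; subst; eauto.
  - now apply masked_typed_Skip in Hc1.
  - match goal with H : masked_typed _ Skip |- _ => now apply masked_typed_Skip in H end.
  - congruence.
Qed.

Lemma pub_agree_b_guard be : pub_agree_b P 1 (guard P be).
Proof.
  intros r1 r2 E1 E2 Hp. unfold guard. destruct (label_of_bexp P be) eqn:Hl.
  - now apply (pub_equiv_eval P r1 r2 Hp).
  - simpl. now rewrite E1, E2.
Qed.

Lemma pub_agree_mask_index i : pub_agree P 1 (mask_index i).
Proof. intros r1 r2 E1 E2 _. simpl. now rewrite E1, E2. Qed.

Lemma masked_const_msf : masked_const 1 (AId msf).
Proof. now intros r E. Qed.

Lemma masked_const_ANum n : masked_const n (ANum n).
Proof. now intros r E. Qed.

Lemma masked_const_ACTIf n g e1 e2 :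
  masked_const n e1 -> masked_const n e2 -> masked_const n (ACTIf g e1 e2).
Proof. intros H1 H2 r E; simpl. now destruct (beval r g); auto. Qed.

Lemma masked_typed_fvslh PA c : explicit_typed P PA c -> masked_typed Clean (fvslh P c).
Proof.
  induction 1 as [| X e Hne He | | | | X a i Hne Hi | a i e He]; simpl;
    repeat first [ apply MT_AsgnMsf | constructor | apply pub_agree_b_guard
                 | apply masked_const_ACTIf | apply masked_const_msf | apply masked_const_ANum ];
    auto.
  - intros HX. now apply pub_agree_label, He.
  - destruct (P X) eqn:HX; simpl.
    + destruct (Hi eq_refl) as [Hl _]. rewrite Hl. apply MT_ReadZero; auto.
      * now apply pub_agree_label.
      * intros r E. simpl. now rewrite E.
    + destruct (label_of_aexp P i) eqn:Hl; constructor; auto.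
      * now apply pub_agree_label.
      * apply pub_agree_mask_index.
  - destruct (label_of_aexp P i) eqn:Hl; constructor.
    + now apply pub_agree_label.
    + apply pub_agree_mask_index.
Qed.

End Masked.

Section MaskedLockstep.

Variable P : pub_vars.

Definition masked_lockstep (m : mode) (c : com) : Prop :=
  forall r1 mu1 r2 mu2 d o1 o2 c1 r1' mu1' b1' c2 r2' mu2' b2',
  masked_equiv P m r1 r2 ->
  spec_step (c, r1, mu1, true) d o1 (c1, r1', mu1', b1') ->
  spec_step (c, r2, mu2, true) d o2 (c2, r2', mu2', b2') ->
  o1 = o2 /\ exists m', masked_typed P m' c1 /\ masked_equiv P m' r1' r2'.

Lemma masked_lockstep_Asgn m X e :
  (forall r1 r2, masked_equiv P m r1 r2 ->
     masked_equiv P Clean (upd_reg r1 X (aeval r1 e)) (upd_reg r2 X (aeval r2 e))) ->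
  masked_lockstep m (Asgn X e).
Proof.
  intros Hupd; intros until b2'; intros He S1 S2.
  inversion S1; inversion S2; subst.
  split; auto. exists Clean. split; [constructor | auto].
Qed.

Lemma masked_lockstep_Seq m c1 c2 :
  masked_typed P m c1 -> masked_lockstep m c1 -> masked_typed P Clean c2 ->
  masked_lockstep m (Seq c1 c2).
Proof.
  intros H1 IH H2; intros until b2'; intros He S1 S2.
  apply spec_step_Seq_inv in S1 as [[c1a [S1 ->]] | (-> & _ & -> & -> & -> & _ & _)];
  apply spec_step_Seq_inv in S2 as [[c2a [S2 ->]] | (E & _ & -> & -> & -> & _ & _)];
    try (subst; exfalso; eapply spec_step_Skip; eassumption).
  - destruct (IH _ _ _ _ _ _ _ _ _ _ _ _ _ _ _ He S1 S2) as [-> [m' [Hc He']]].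
    split; auto. exists m'. split; auto. now constructor.
  - apply masked_typed_Skip in H1 as ->. split; auto. now exists Clean.
Qed.

Lemma masked_lockstep_SeqSkip m c : masked_typed P m c -> masked_lockstep m (Seq Skip c).
Proof.
  intros Hc; intros until b2'; intros He S1 S2.
  apply spec_step_Seq_inv in S1 as [[? [S1 _]] | (_ & _ & -> & -> & -> & _ & _)];
    [exfalso; eapply spec_step_Skip; eassumption |].
  apply spec_step_Seq_inv in S2 as [[? [S2 _]] | (_ & _ & -> & _ & -> & _ & _)];
    [exfalso; eapply spec_step_Skip; eassumption |].
  split; auto. now exists m.
Qed.

Lemma masked_lockstep_If be c1 c2 :
  pub_agree_b P 1 be -> masked_typed P Clean c1 -> masked_typed P Clean c2 ->
  masked_lockstep Clean (If be c1 c2).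
Proof.
  intros Hbe H1 H2; intros until b2'; intros He S1 S2.
  pose proof He as (E1 & E2 & Hp).
  inversion S1; inversion S2; subst; try discriminate;
    rewrite (Hbe _ _ E1 E2 Hp); split; auto; exists Clean; split; auto;
    match goal with |- context [beval ?r be] => now destruct (beval r be) end.
Qed.

Lemma masked_lockstep_While be c :
  pub_agree_b P 1 be -> masked_typed P Clean c -> masked_lockstep Clean (While be c).
Proof.
  intros Hbe Hc; intros until b2'; intros He S1 S2.
  inversion S1; inversion S2; subst.
  split; auto. exists Clean. split; auto. repeat constructor; auto.
Qed.

(* The loaded value is unconstrained (it may come from any array), so only [X] may disagree. *)
Lemma masked_read_Dirty X a i r1 mu1 r2 mu2 d o1 o2 c1 r1' mu1' b1' c2 r2' mu2' b2' :
  X <> msf -> pub_agree P 1 i -> masked_equiv P Clean r1 r2 ->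
  spec_step (ARead X a i, r1, mu1, true) d o1 (c1, r1', mu1', b1') ->
  spec_step (ARead X a i, r2, mu2, true) d o2 (c2, r2', mu2', b2') ->
  o1 = o2 /\ c1 = Skip /\ masked_equiv P (Dirty X) r1' r2'.
Proof.
  intros Hne Hi (E1 & E2 & Hp) S1 S2.
  inversion S1; inversion S2; subst; try discriminate;
    rewrite (Hi _ _ E1 E2 Hp); repeat split; auto; rewrite ?upd_reg_neq; auto;
    intros Y HY HYX; rewrite !upd_reg_neq; auto.
Qed.

Lemma masked_equiv_Dirty_secret X r1 r2 :
  P X = false -> masked_equiv P (Dirty X) r1 r2 -> masked_equiv P Clean r1 r2.
Proof.
  intros HX (E1 & E2 & Hp). repeat split; auto.
  intros Y HY. apply Hp; congruence.
Qed.

Lemma masked_lockstep_Read X a i :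
  X <> msf -> P X = false -> pub_agree P 1 i -> masked_lockstep Clean (ARead X a i).
Proof.
  intros Hne HX Hi; intros until b2'; intros He S1 S2.
  destruct (masked_read_Dirty X a i _ _ _ _ _ _ _ _ _ _ _ _ _ _ _ Hne Hi He S1 S2)
    as (-> & -> & Hd).
  split; auto. exists Clean. split; [constructor |].
  eapply masked_equiv_Dirty_secret; eauto.
Qed.

Lemma masked_lockstep_ReadZero X a i e :
  X <> msf -> pub_agree P 1 i -> masked_const 0 e ->
  masked_lockstep Clean (Seq (ARead X a i) (Asgn X e)).
Proof.
  intros Hne Hi He; intros until b2'; intros Heq S1 S2.
  apply spec_step_Seq_inv in S1 as [[c1a [S1 ->]] | (? & _)]; [| discriminate].
  apply spec_step_Seq_inv in S2 as [[c2a [S2 ->]] | (? & _)]; [| discriminate].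
  destruct (masked_read_Dirty X a i _ _ _ _ _ _ _ _ _ _ _ _ _ _ _ Hne Hi Heq S1 S2)
    as (-> & -> & Hd).
  split; auto. exists (Dirty X). split; auto. now do 2 constructor.
Qed.

Lemma masked_lockstep_Write a i e : pub_agree P 1 i -> masked_lockstep Clean (AWrite a i e).
Proof.
  intros Hi; intros until b2'; intros He S1 S2.
  pose proof He as (E1 & E2 & Hp).
  inversion S1; inversion S2; subst; try discriminate;
    rewrite (Hi _ _ E1 E2 Hp); split; auto; exists Clean; split; auto; constructor.
Qed.

Lemma masked_typed_lockstep m c : masked_typed P m c -> masked_lockstep m c.
Proof.
  induction 1 as [| X e Hne He | e He | | | | | | | | X e Hne He | e];
    try first [ now apply masked_lockstep_Seq | now apply masked_lockstep_SeqSkip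
              | now apply masked_lockstep_If | now apply masked_lockstep_While
              | now apply masked_lockstep_Read | now apply masked_lockstep_ReadZero
              | now apply masked_lockstep_Write ].
  - intros until b2'; intros _ S. now apply spec_step_Skip in S.
  - apply masked_lockstep_Asgn. intros r1 r2 (E1 & E2 & Hp); simpl.
    rewrite !upd_reg_neq by congruence. repeat split; auto.
    apply pub_equiv_upd; auto. intros HX. now apply He.
  - apply masked_lockstep_Asgn. intros r1 r2 (E1 & E2 & Hp); simpl.
    rewrite !upd_reg_eq, !He by auto. repeat split; auto. now apply pub_equiv_upd.
  - apply masked_lockstep_Asgn. intros r1 r2 (E1 & E2 & Hd); simpl.
    rewrite !upd_reg_neq by congruence. repeat split; auto.
    intros Y HY. unfold upd_reg. destruct (String.eqb_spec Y X) as [-> |]; auto.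
    now rewrite !He.
  - apply masked_lockstep_Asgn. intros r1 r2 (Hp & E1 & E2); simpl.
    rewrite !upd_reg_eq. repeat split; auto. apply pub_equiv_upd; [exact Hp | congruence].
Qed.

End MaskedLockstep.

Definition seq_step_or_stay (s : com * reg * mem) (o : obs) (s' : com * reg * mem) : Prop :=
  (o = [] /\ s' = s) \/ seq_step s o s'.

Section Residual.

Variable P : pub_vars.
Variable PA : pub_arrs.

Lemma seq_step_msf cs r m o cs' r' m' :
  explicit_typed P PA cs -> seq_step (cs, r, m) o (cs', r', m') -> r' msf = r msf.
Proof.
  intros Hc S. remember (cs, r, m) as x eqn:Ex. remember (cs', r', m') as x' eqn:Ex'.
  revert cs r m cs' r' m' Ex Ex' Hc.
  induction S; intros; inversion Ex; inversion Ex'; subst; inversion Hc; subst; eauto;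
    apply upd_reg_neq; congruence.
Qed.

Lemma guard_unmasked r be : r msf = 0 -> beval r (guard P be) = beval r be.
Proof. intros E. unfold guard. destruct (label_of_bexp P be); simpl; now rewrite ?E. Qed.

Lemma mask_index_unmasked r i : r msf = 0 -> aeval r (mask_index i) = aeval r i.
Proof. intros E. simpl. now rewrite E. Qed.

Lemma fvslh_Skip_inv c : fvslh P c = Skip -> c = Skip.
Proof.
  destruct c; simpl; try discriminate; auto.
  - destruct (P X && label_of_aexp P i); [discriminate |].
    destruct (label_of_aexp P i); discriminate.
  - destruct (label_of_aexp P i); discriminate.
Qed.

Definition loop_body (be : bexp) (c : com) : com :=
  Seq (Asgn msf (ACTIf (guard P be) (AId msf) (ANum 1))) (fvslh P c).

Definition loop_exit (be : bexp) : com := Asgn msf (ACTIf (guard P be) (ANum 1) (AId msf)).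

Definition hardened_loop (be : bexp) (c : com) : com := While (guard P be) (loop_body be c).

Lemma fvslh_While be c : fvslh P (While be c) = Seq (hardened_loop be c) (loop_exit be).
Proof. reflexivity. Qed.

(* [residual rho ct cs]: the hardened code [ct], run with [msf = 0] from registers [rho],
   is still in step with the source code [cs].  The [Nop] rules absorb the [msf] updates and
   the zeroing of loaded public registers, which leave [rho] unchanged when [msf = 0]. *)
Inductive residual (rho : reg) : com -> com -> Prop :=
  | Res_fvslh c : explicit_typed P PA c -> residual rho (fvslh P c) c
  | Res_Seq t s c : residual rho t s -> explicit_typed P PA c ->
      residual rho (Seq t (fvslh P c)) (Seq s c)
  | Res_Loop t s be c : residual rho t s -> explicit_typed P PA c ->
      residual rho (Seq (Seq t (hardened_loop be c)) (loop_exit be)) (Seq s (While be c))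
  | Res_LoopIf be c : explicit_typed P PA c ->
      residual rho (Seq (If (guard P be) (Seq (loop_body be c) (hardened_loop be c)) Skip)
                        (loop_exit be))
                   (If be (Seq c (While be c)) Skip)
  | Res_Nop X e t s : aeval rho e = rho X -> residual rho t s ->
      residual rho (Seq (Asgn X e) t) s
  | Res_NopSkip X e : aeval rho e = rho X -> residual rho (Asgn X e) Skip
  | Res_SkipSeq t s : residual rho t s -> residual rho (Seq Skip t) s.

Lemma residual_explicit rho ct cs : residual rho ct cs -> explicit_typed P PA cs.
Proof. induction 1; repeat constructor; auto. Qed.

Lemma residual_Skip rho cs : residual rho Skip cs -> cs = Skip.
Proof.
  intros H. remember Skip as t eqn:Et in H.
  destruct H; try discriminate. now apply fvslh_Skip_inv.
Qed.

Lemma residual_Skip_Skip rho : residual rho Skip Skip.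
Proof. exact (Res_fvslh rho Skip (ET_Skip P PA)). Qed.

Inductive unmasked_outcome (rho : reg) (mu : mem) (cs : com) : dirs -> obs -> cfg -> Prop :=
  | Out_Silent ct' : residual rho ct' cs ->
      unmasked_outcome rho mu cs [] [] (ct', rho, mu, false)
  | Out_Match d o ct' rho' mu' cs' : d <> [DForce] ->
      seq_step (cs, rho, mu) o (cs', rho', mu') -> residual rho' ct' cs' ->
      unmasked_outcome rho mu cs d o (ct', rho', mu', false)
  | Out_Force o ct' e s' : seq_step (cs, rho, mu) o s' ->
      masked_typed P (Arming e) ct' -> aeval rho e = 1 ->
      unmasked_outcome rho mu cs [DForce] o (ct', rho, mu, true).

Definition simulates (rho : reg) (ct cs : com) : Prop :=
  forall mu d o x', rho msf = 0 -> spec_step (ct, rho, mu, false) d o x' ->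
  unmasked_outcome rho mu cs d o x'.

(* [k] is the hardened counterpart of the source context [Seq _ c]. *)
Lemma unmasked_outcome_Seq (k : com -> com) rho mu s c d o ct' rho' mu' b' :
  (forall r t' s', residual r t' s' -> residual r (k t') (Seq s' c)) ->
  (forall e t', masked_typed P (Arming e) t' -> masked_typed P (Arming e) (k t')) ->
  unmasked_outcome rho mu s d o (ct', rho', mu', b') ->
  unmasked_outcome rho mu (Seq s c) d o (k ct', rho', mu', b').
Proof.
  intros Hres Harm Out. inversion Out; subst.
  - now apply Out_Silent, Hres.
  - eapply Out_Match; eauto. now constructor.
  - destruct s' as [[s'' r''] m'']. eapply Out_Force; eauto. apply SS_Seq; eassumption.
Qed.

Lemma simulates_Seq rho t s c :
  residual rho t s -> simulates rho t s -> explicit_typed P PA c ->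
  simulates rho (Seq t (fvslh P c)) (Seq s c).
Proof.
  intros Hres Hsim Hc mu d o [[[ct' rho'] mu'] b'] E S.
  apply spec_step_Seq_inv in S as [[t' [S ->]] | (-> & -> & -> & -> & -> & -> & ->)].
  - apply (unmasked_outcome_Seq (fun t => Seq t (fvslh P c))); eauto.
    + intros; now constructor.
    + intros; constructor; auto. eapply masked_typed_fvslh; eauto.
  - apply residual_Skip in Hres as ->.
    eapply Out_Match; [discriminate | apply SS_SeqSkip | now constructor].
Qed.

Lemma simulates_Loop rho t s be c :
  residual rho t s -> simulates rho t s -> explicit_typed P PA c ->
  simulates rho (Seq (Seq t (hardened_loop be c)) (loop_exit be)) (Seq s (While be c)).
Proof.
  intros Hres Hsim Hc mu d o [[[ct' rho'] mu'] b'] E S.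
  assert (Hloop : masked_typed P Clean (fvslh P (While be c))).
  { apply (masked_typed_fvslh _ PA). now constructor. }
  rewrite fvslh_While in Hloop. inversion Hloop; subst.
  apply spec_step_Seq_inv in S as [[t0 [S ->]] | (? & _)]; [| discriminate].
  apply spec_step_Seq_inv in S as [[t' [S ->]] | (-> & -> & -> & -> & -> & -> & ->)].
  - apply (unmasked_outcome_Seq (fun t => Seq (Seq t (hardened_loop be c)) (loop_exit be)));
      eauto.
    + intros; now apply Res_Loop.
    + intros; now apply MT_Seq; [apply MT_Seq |].
  - apply residual_Skip in Hres as ->.
    eapply Out_Match; [discriminate | apply SS_SeqSkip |].
    rewrite <- fvslh_While. now repeat constructor.
Qed.

Lemma simulates_Nop rho X e t s :
  aeval rho e = rho X -> residual rho t s -> simulates rho (Seq (Asgn X e) t) s.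
Proof.
  intros He Hres mu d o [[[ct' rho'] mu'] b'] E S.
  apply spec_step_Seq_inv in S as [[t1 [S ->]] | (? & _)]; [| discriminate].
  inversion S; subst. rewrite He, upd_reg_id. now apply Out_Silent, Res_SkipSeq.
Qed.

Lemma simulates_NopSkip rho X e : aeval rho e = rho X -> simulates rho (Asgn X e) Skip.
Proof.
  intros He mu d o x' E S. inversion S; subst.
  rewrite He, upd_reg_id. apply Out_Silent, residual_Skip_Skip.
Qed.

Lemma simulates_SkipSeq rho t s : residual rho t s -> simulates rho (Seq Skip t) s.
Proof.
  intros Hres mu d o [[[ct' rho'] mu'] b'] E S.
  apply spec_step_Seq_inv in S as [[t1 [S _]] | (_ & -> & -> & -> & -> & -> & ->)].
  - now apply spec_step_Skip in S.
  - now apply Out_Silent.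
Qed.

Lemma simulates_fvslh_If rho be c1 c2 :
  explicit_typed P PA c1 -> explicit_typed P PA c2 ->
  simulates rho (fvslh P (If be c1 c2)) (If be c1 c2).
Proof.
  intros H1 H2 mu d o x' E S. simpl in S.
  inversion S; subst; rewrite (guard_unmasked _ _ E).
  - eapply Out_Match; [discriminate | apply SS_If |].
    destruct (beval rho be) eqn:Hb;
      (apply Res_Nop; [simpl; now rewrite (guard_unmasked _ _ E), Hb | now apply Res_fvslh]).
  - pose proof (SS_If be c1 c2 rho mu) as Src.
    destruct (beval rho be) eqn:Hb; simpl;
      (eapply Out_Force;
         [exact Src | apply MT_Seq; [apply MT_Arm | eapply masked_typed_fvslh; eauto] |]);
      simpl; now rewrite (guard_unmasked _ _ E), Hb.
Qed.

Lemma simulates_LoopIf rho be c :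
  explicit_typed P PA c ->
  simulates rho (Seq (If (guard P be) (Seq (loop_body be c) (hardened_loop be c)) Skip)
                     (loop_exit be))
                (If be (Seq c (While be c)) Skip).
Proof.
  intros Hc mu d o [[[ct' rho'] mu'] b'] E S.
  assert (Hloop : masked_typed P Clean (fvslh P (While be c))).
  { apply (masked_typed_fvslh _ PA). now constructor. }
  rewrite fvslh_While in Hloop. inversion Hloop as [| | | ? ? ? HW Hexit | | | | | | | |]; subst.
  apply spec_step_Seq_inv in S as [[t' [S ->]] | (? & _)]; [| discriminate].
  inversion S; subst; rewrite (guard_unmasked _ _ E).
  - eapply Out_Match; [discriminate | apply SS_If |].
    destruct (beval rho' be) eqn:Hb.
    + apply Res_Loop; auto. apply Res_Nop; [| now apply Res_fvslh].
      simpl. now rewrite (guard_unmasked _ _ E), Hb.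
    + apply Res_SkipSeq, Res_NopSkip. simpl. now rewrite (guard_unmasked _ _ E), Hb.
  - pose proof (SS_If be (Seq c (While be c)) Skip rho' mu') as Src.
    destruct (beval rho' be) eqn:Hb; simpl.
    + eapply Out_Force; [exact Src | apply MT_SeqSkip, MT_Arm |].
      simpl. now rewrite (guard_unmasked _ _ E), Hb.
    + eapply Out_Force; [exact Src | |].
      * repeat apply MT_Seq; auto; [apply MT_Arm | eapply masked_typed_fvslh; eauto].
      * simpl. now rewrite (guard_unmasked _ _ E), Hb.
Qed.

Lemma simulates_fvslh_Read rho X a i :
  explicit_typed P PA (ARead X a i) -> simulates rho (fvslh P (ARead X a i)) (ARead X a i).
Proof.
  intros Hc mu d o [[[ct' rho'] mu'] b'] E S.
  inversion Hc as [| | | | | ? ? ? Hne _ |]; subst. simpl in S.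
  destruct (P X && label_of_aexp P i).
  - apply spec_step_Seq_inv in S as [[t' [S ->]] | (? & _)]; [| discriminate].
    inversion S; subst.
    eapply Out_Match; [discriminate | now constructor |].
    apply Res_SkipSeq, Res_NopSkip. simpl. now rewrite upd_reg_neq, E by congruence.
  - destruct (label_of_aexp P i); inversion S; subst;
      rewrite ?(mask_index_unmasked _ _ E) in *;
      (eapply Out_Match; [discriminate | now constructor | apply residual_Skip_Skip]).
Qed.

Lemma simulates_fvslh_Write rho a i e : simulates rho (fvslh P (AWrite a i e)) (AWrite a i e).
Proof.
  intros mu d o [[[ct' rho'] mu'] b'] E S. simpl in S.
  destruct (label_of_aexp P i); inversion S; subst;
    rewrite ?(mask_index_unmasked _ _ E) in *;
    (eapply Out_Match; [discriminate | now constructor | apply residual_Skip_Skip]).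
Qed.

Lemma simulates_fvslh rho c : explicit_typed P PA c -> simulates rho (fvslh P c) c.
Proof.
  induction 1 as [| X e | c1 c2 H1 IH1 H2 IH2 | be c1 c2 H1 _ H2 _ | be c Hc _ | X a i | a i e].
  - intros mu d o x' _ S. now apply spec_step_Skip in S.
  - intros mu d o x' _ S. inversion S; subst.
    eapply Out_Match; [discriminate | constructor | apply residual_Skip_Skip].
  - apply simulates_Seq; auto. now apply Res_fvslh.
  - now apply simulates_fvslh_If.
  - intros mu d o [[[ct' rho'] mu'] b'] _ S. simpl in S.
    apply spec_step_Seq_inv in S as [[t' [S ->]] | (? & _)]; [| discriminate].
    inversion S; subst.
    eapply Out_Match; [discriminate | constructor | now apply Res_LoopIf].
  - apply simulates_fvslh_Read. now constructor.
  - apply simulates_fvslh_Write.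
Qed.

Lemma residual_simulates rho ct cs : residual rho ct cs -> simulates rho ct cs.
Proof.
  induction 1.
  - now apply simulates_fvslh.
  - now apply simulates_Seq.
  - now apply simulates_Loop.
  - now apply simulates_LoopIf.
  - now apply simulates_Nop.
  - now apply simulates_NopSkip.
  - now apply simulates_SkipSeq.
Qed.

Lemma unmasked_outcome_forced rho mu cs o x' :
  unmasked_outcome rho mu cs [DForce] o x' ->
  exists ct' e s', x' = (ct', rho, mu, true) /\ seq_step (cs, rho, mu) o s' /\
    masked_typed P (Arming e) ct' /\ aeval rho e = 1.
Proof. inversion 1; subst; [congruence | eauto 7]. Qed.

Lemma unmasked_outcome_unforced rho mu cs d o ct' rho' mu' b' :
  unmasked_outcome rho mu cs d o (ct', rho', mu', b') -> d <> [DForce] ->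
  rho msf = 0 -> explicit_typed P PA cs ->
  b' = false /\ rho' msf = 0 /\
  exists cs', residual rho' ct' cs' /\ seq_step_or_stay (cs, rho, mu) o (cs', rho', mu').
Proof.
  inversion 1; subst; intros Hd E Hc; try congruence.
  - repeat split; auto. exists cs. split; auto. now left.
  - repeat split; auto.
    + erewrite seq_step_msf; eauto.
    + exists cs'. split; auto. now right.
Qed.

End Residual.

Lemma DForce_dec (d : dirs) : d = [DForce] \/ d <> [DForce].
Proof. destruct d as [| [] [|]]; (left; reflexivity) || (right; discriminate). Qed.

Lemma seq_multi_extend x O s o s' :
  seq_multi x O s -> seq_step_or_stay s o s' -> seq_multi x (O ++ o) s'.
Proof.
  intros M [[-> ->] | S]; [now rewrite app_nil_r |].
  induction M.
  - simpl. rewrite <- (app_nil_r o). econstructor; [exact S | constructor].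
  - rewrite <- app_assoc. econstructor; eauto.
Qed.

Lemma prefix_length_eq {A : Type} (l1 l2 : list A) :
  prefix l1 l2 -> length l1 = length l2 -> l1 = l2.
Proof.
  intros [l ->] L. rewrite length_app in L.
  destruct l; [now rewrite app_nil_r | simpl in L; lia].
Qed.

Lemma seq_same_obs_next c rho1 mu1 rho2 mu2 O s1 s2 o1 o2 s1' s2' :
  seq_same_obs c rho1 mu1 c rho2 mu2 ->
  seq_multi (c, rho1, mu1) O s1 -> seq_multi (c, rho2, mu2) O s2 ->
  seq_step_or_stay s1 o1 s1' -> seq_step_or_stay s2 o2 s2' ->
  length o1 = length o2 -> o1 = o2.
Proof.
  intros Hseq M1 M2 S1 S2 L.
  destruct s1' as [[? ?] ?], s2' as [[? ?] ?].
  destruct (Hseq _ _ _ _ (seq_multi_extend _ _ _ _ _ M1 S1) (seq_multi_extend _ _ _ _ _ M2 S2))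
    as [Hpre | Hpre]; apply prefix_length_eq in Hpre; rewrite ?length_app, ?L; auto;
    eapply app_inv_head; eauto.
Qed.

Section Pairing.

Variable P : pub_vars.
Variable PA : pub_arrs.
Variable c0 : com.
Variables rho1 rho2 : reg.
Variables mu1 mu2 : mem.
Hypothesis c0_same_obs : seq_same_obs c0 rho1 mu1 c0 rho2 mu2.

(* Before misspeculation both runs of the hardened code trail source runs of [c0] that have
   made the same observations [O]; the two source commands may differ. *)
Definition unmasked_pair (x y : cfg) : Prop :=
  let '(ct, r1, m1, b1) := x in
  let '(ct2, r2, m2, b2) := y in
  ct = ct2 /\ b1 = false /\ b2 = false /\ r1 msf = 0 /\ r2 msf = 0 /\
  pub_equiv P r1 r2 /\ pub_equiv_arr PA m1 m2 /\ unmasked_typed P PA ct /\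
  exists O cs1 cs2, residual P PA r1 ct cs1 /\ residual P PA r2 ct cs2 /\
    seq_multi (c0, rho1, mu1) O (cs1, r1, m1) /\ seq_multi (c0, rho2, mu2) O (cs2, r2, m2).

Definition masked_pair (x y : cfg) : Prop :=
  let '(ct, r1, _, b1) := x in
  let '(ct2, r2, _, b2) := y in
  ct = ct2 /\ b1 = true /\ b2 = true /\
  exists m, masked_typed P m ct /\ masked_equiv P m r1 r2.

Definition paired (x y : cfg) : Prop := unmasked_pair x y \/ masked_pair x y.

Lemma paired_cmd x y : paired x y -> cmd_of x = cmd_of y.
Proof.
  destruct x as [[[? ?] ?] ?], y as [[[? ?] ?] ?].
  intros [H | H]; apply H.
Qed.

Lemma masked_pair_step x y d o1 o2 x' y' :
  masked_pair x y -> spec_step x d o1 x' -> spec_step y d o2 y' -> o1 = o2 /\ masked_pair x' y'.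
Proof.
  destruct x as [[[ct r1] m1] b1], y as [[[ct2 r2] m2] b2],
    x' as [[[c1 r1'] m1'] b1'], y' as [[[c2 r2'] m2'] b2'].
  intros (<- & -> & -> & m & Hc & He) S1 S2.
  destruct (masked_typed_lockstep P _ _ Hc _ _ _ _ _ _ _ _ _ _ _ _ _ _ _ He S1 S2)
    as (<- & m' & Hc' & He').
  split; auto. repeat split.
  - eapply spec_step_cmd_det; eauto.
  - eapply spec_step_flag_true; eauto.
  - eapply spec_step_flag_true; eauto.
  - eauto.
Qed.

Lemma unmasked_pair_step x y d o1 o2 x' y' :
  unmasked_pair x y -> spec_step x d o1 x' -> spec_step y d o2 y' -> o1 = o2 /\ paired x' y'.
Proof.
  destruct x as [[[ct r1] m1] b1], y as [[[ct2 r2] m2] b2],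
    x' as [[[c1 r1'] m1'] b1'], y' as [[[c2 r2'] m2'] b2'].
  intros (<- & -> & -> & E1 & E2 & Hp & Ha & Hut & O & cs1 & cs2 & R1 & R2 & M1 & M2) S1 S2.
  pose proof (residual_simulates _ _ _ _ _ R1 _ _ _ _ E1 S1) as Out1.
  pose proof (residual_simulates _ _ _ _ _ R2 _ _ _ _ E2 S2) as Out2.
  assert (L : length o1 = length o2).
  { destruct (spec_step_width _ _ _ _ S1) as [_ ->].
    destruct (spec_step_width _ _ _ _ S2) as [_ ->]. reflexivity. }
  destruct (DForce_dec d) as [-> | Hd].
  - apply unmasked_outcome_forced in Out1 as (c1' & e1 & s1' & Ex1 & Src1 & Hc1 & He1).
    apply unmasked_outcome_forced in Out2 as (c2' & e2 & s2' & Ex2 & Src2 & Hc2 & He2).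
    injection Ex1 as -> -> -> ->. injection Ex2 as -> -> -> ->.
    assert (Eo : o1 = o2) by (eapply seq_same_obs_next; eauto; right; eauto).
    subst o2.
    pose proof (spec_step_cmd_det _ _ _ _ _ _ _ _ _ _ _ _ _ _ _ _ _ S1 S2) as <-.
    pose proof (masked_typed_Arming_inj _ _ _ _ Hc1 Hc2) as <-.
    split; auto. right. repeat split; auto. exists (Arming e1). now repeat split.
  - apply residual_explicit in R1 as Hcs1. apply residual_explicit in R2 as Hcs2.
    destruct (unmasked_outcome_unforced P PA _ _ _ _ _ _ _ _ _ Out1 Hd E1 Hcs1)
      as (-> & E1' & cs1' & R1' & Src1).
    destruct (unmasked_outcome_unforced P PA _ _ _ _ _ _ _ _ _ Out2 Hd E2 Hcs2)
      as (-> & E2' & cs2' & R2' & Src2).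
    assert (Eo : o1 = o2) by (eapply seq_same_obs_next; eauto).
    subst o2.
    pose proof (spec_step_cmd_det _ _ _ _ _ _ _ _ _ _ _ _ _ _ _ _ _ S1 S2) as <-.
    destruct (unmasked_step_pub_equiv P PA _ _ _ _ _ _ _ _ _ _ _ _ _ _ _
                Hut Hp Ha E1 E2 S1 S2 ltac:(congruence)) as [Hp' Ha'].
    split; auto. left. repeat split; auto.
    + eapply unmasked_typed_step; eauto.
    + exists (O ++ o1), cs1', cs2'. repeat split; auto; eapply seq_multi_extend; eauto.
Qed.

Lemma paired_step x y d o1 o2 x' y' :
  paired x y -> spec_step x d o1 x' -> spec_step y d o2 y' -> o1 = o2 /\ paired x' y'.
Proof.
  intros [H | H] S1 S2.
  - eapply unmasked_pair_step; eauto.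
  - destruct (masked_pair_step _ _ _ _ _ _ _ H S1 S2). split; auto. now right.
Qed.

End Pairing.

Theorem theorem6p1 :
  forall (P : pub_vars) (PA : pub_arrs) (c : com)
         (rho1 rho2 : reg) (mu1 mu2 : mem),
    ~ In msf (used_vars c) ->
    rho1 msf = 0 -> rho2 msf = 0 ->
    (forall a, 0 < length (mu1 a)) ->
    (forall a, 0 < length (mu2 a)) ->
    well_typed P PA true c ->
    pub_equiv P rho1 rho2 ->
    pub_equiv_arr PA mu1 mu2 ->
    seq_same_obs c rho1 mu1 c rho2 mu2 ->
    spec_same_obs (fvslh P c) rho1 mu1 false (fvslh P c) rho2 mu2 false.
Proof.
  intros P PA c rho1 rho2 mu1 mu2 Hmsf E1 E2 _ _ Hwt Hp Ha Hseq ds x1 x2 os1 os2 M1 M2.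
  assert (Hc : explicit_typed P PA c) by (eapply well_typed_explicit; eauto).
  assert (Hpair : paired P PA c rho1 rho2 mu1 mu2
                    (fvslh P c, rho1, mu1, false) (fvslh P c, rho2, mu2, false)).
  { left. repeat split; auto.
    - now apply unmasked_typed_fvslh.
    - exists [], c, c. repeat split; try constructor; auto. }
  eapply lockstep; eauto.
  - apply paired_cmd.
  - apply paired_step, Hseq.
Qed.
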